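(* Suppose that Assumptions 1--5 and Assumption 8 hold. Furthermore, suppose that $V_{1}(x_{1}^{aug})=x_{1}^{aug,T}Qx_{1}^{aug}$ and $V_{2}(\tilde{x})=\tilde{x}^{T}P\tilde{x}$, along with scalars $\alpha_{1}>0$, $\alpha_{2}>0$, $\bar{\gamma}_{1}>0$, $\bar{\gamma}_{21}>0$, $\bar{\gamma}_{22}\geq 0$ such that, under $v_{des}(k)=-K_{1}x_{1}^{aug}(k)$ and $u(k)=K_{21}v_{des}(k)-K_{22}x_{2}(k)$, \begin{eqnarray*} V_{1}(x_{1}^{aug}(k+1))-V_{1}(x_{1}^{aug}(k)) &<& -\alpha_{1} V_{1}(x_{1}^{aug}(k)) + \bar{\gamma}_{1} \|\tilde{v}(k)\|^{2},\\ V_{2}(\tilde{x}(k+1))-V_{2}(\tilde{x}(k)) &<& -\alpha_{2}V_{2}(\tilde{x}(k)) + \bar{\gamma}_{21} \|v_{des}(k)\|^{2} + \bar{\gamma}_{22} \|x_{f}(k)\|^{2}, \end{eqnarray*} together with the matrices $C$ and $K_{1}$, satisfy \begin{equation*} \alpha_{1}\alpha_{2}\bar{\lambda}_{min}(P)\bar{\lambda}_{min}(Q) \geq \bar{\gamma}_{1}\|C\|^{2}(\bar{\gamma}_{21}\|K_{1}\|^{2}+\bar{\gamma}_{22}), \end{equation*} where $\bar{\lambda}_{min}(P)$ and $\bar{\lambda}_{min}(Q)$ are the minimum eigenvalues of $P$ and $Q$. Then there exist sets $G_{1} \subset \mathbb{R}^{n_{1}+n_{2}}$ and $G_{2} \subset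 \mathbb{R}^{n_{2}}$, along with scalars $0 \leq \lambda_{1} < 1$ and $0 \leq \lambda_{2} < 1$, such that if $x_{1}^{aug}(k) \in G_{1}$, $\tilde{x}(k) \in G_{2}$, $v_{des}(k) = -K_{1}x_{1}(k)$, and $u(k) = K_{21}v_{des}(k) - K_{22}x_{2}(k)$, then $u(k) \in U$, $x_{1}^{aug}(k+1) \in \lambda_{1}G_{1}$, and $\tilde{x}(k+1) \in \lambda_{2}G_{2}$.
   Context: Setting: cascade $x_{1}(k+1)=A_{1}x_{1}(k)+B_{1}v(k)$, $x_{2}(k+1)=A_{2}x_{2}(k)+B_{2}u(k)$, $v=Cx_{2}$, $u(k)\in U$; reference model $x_{f}(k+1)=A_{f}x_{f}(k)+B_{f}v_{des}(k)$; error $\tilde{x}=x_{2}-x_{f}$, $\tilde{v}=C\tilde{x}$, $\tilde{x}(k+1)=A_{2}\tilde{x}(k)+(A_{2}-A_{f})x_{f}(k)+B_{2}u(k)-B_{f}v_{des}(k)$; augmented outer state $x_{1}^{aug}=[x_{1}^{T}\ x_{f}^{T}]^{T}$ with $x_{1}^{aug}(k+1)=A_{1}^{aug}x_{1}^{aug}(k)+B_{1}^{aug}\tilde{v}(k)+B_{f}^{aug}v_{des}(k)$, $A_{1}^{aug}=\begin{bmatrix}A_{1}&B_{1}C\\0&A_{f}\end{bmatrix}$, $B_{1}^{aug}=[B_{1}^{T}\ 0]^{T}$, $B_{f}^{aug}=[0\ B_{f}^{T}]^{T}$. Assumptions: (1) $(A_{1},B_{1})$ stabilizable; (2) $(A_{2},B_{2})$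 controllable; (3) actuator dynamics in block controllable canonical form; (4) $A_{f}$ Schur stable; (5) reference model shares no zeros with unstable poles of $A_{1}$; (8) $u=0$ is in the interior of $U$. The gains are chosen so that $A_{1}^{aug}-B_{1}^{aug}K_{1}$ and $A_{2}-B_{2}K_{22}$ are Schur; $Q,P$ are symmetric positive definite. For a set $G$, $\lambda G=\{\lambda x:x\in G\}$. (The paper writes $v_{des}(k)=-K_{1}x_{1}(k)$, presumably meaning $-K_{1}x_{1}^{aug}(k)$.) *)

From HB Require Import structures.
From mathcomp Require Import all_boot all_order all_algebra.
From mathcomp Require Import all_classical all_reals all_analysis.
From mathcomp Require Import complex.
Set Implicit Arguments.
Unset Strict Implicit.
Unset Printing Implicit Defensive.
Import Order.TTheory GRing.Theory Num.Theory.
Local Open Scope classical_set_scope.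
Local Open Scope ring_scope.

Section Defs.
Variable R : realType.

Definition vnorm n (x : 'cV[R]_n) : R := Num.sqrt (\sum_i x i 0 ^+ 2).

Definition opnorm m n (A : 'M[R]_(m, n)) : R :=
  sup [set vnorm (A *m x) | x in [set x : 'cV[R]_n | vnorm x <= 1]].

Definition qform n (M : 'M[R]_n) (x : 'cV[R]_n) : R := (x^T *m M *m x) 0 0.

Definition sym_posdef n (M : 'M[R]_n) : Prop :=
  M^T = M /\ forall x : 'cV[R]_n, x != 0 -> 0 < qform M x.

(* minimum eigenvalue (eigenvalues of a symmetric matrix are real) *)
Definition lambda_min n (M : 'M[R]_n) : R := inf [set r : R | eigenvalue M r].

(* Schur stability: every (complex) eigenvalue, i.e. root of the
   characteristic polynomial, has modulus < 1 *)
Definition schur n (A : 'M[R]_n) : Prop :=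
  forall z : R[i], root (map_poly (fun r : R => Complex r 0) (char_poly A)) z -> `|z| < 1.

Definition stabilizable n m (A : 'M[R]_n) (B : 'M[R]_(n, m)) : Prop :=
  exists K : 'M[R]_(m, n), schur (A - B *m K).

Definition controllable n m (A : 'M[R]_n) (B : 'M[R]_(n, m)) : Prop :=
  \rank (\mxrow_(i < n) (A ^+ i *m B)) = n.

Definition scale_set n (l : R) (G : set 'cV[R]_n) : set 'cV[R]_n :=
  [set l *: x | x in G].

Definition origin_interior n (G : set 'cV[R]_n) : Prop :=
  exists r : R, 0 < r /\ forall x : 'cV[R]_n, vnorm x < r -> G x.

End Defs.

(* The invariant sets are sublevel sets G1 = {V1 <= c} and G2 = {V2 <= k c} of the two
   Lyapunov functions. The small-gain inequality lets one choose the ratio k so that on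
   G1 x G2 the coupling terms are dominated: g1 |C xt|^2 <= alpha1 c and
   g21 |vdes|^2 + g22 |xf|^2 <= alpha2 k c. The decrease inequalities then give
   V1(next) < c and V2(next) < k c at every point of G1 x G2 (where x1aug or xt vanishes,
   by continuity). As V1, V2 are positive definite, G1 x G2 is compact, so these strict
   bounds are uniform and yield the contraction factors; choosing c small keeps the
   input u inside U. *)

From HB Require Import structures.
From mathcomp Require Import all_boot all_order all_algebra.
From mathcomp Require Import all_classical all_reals all_analysis.
From mathcomp Require Import complex.
From mathcomp.algebra_tactics Require Import ring lra.
Import Order.TTheory GRing.Theory Num.Theory.
Import numFieldTopology.Exports numFieldNormedType.Exports.
Set Implicit Arguments.
Unset Strict Implicit.
Unset Printing Implicit Defensive.
Local Open Scope classical_set_scope.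
Local Open Scope ring_scope.

Section QuadraticForms.
Variable R : realType.
Implicit Types (n : nat) (a t : R).

Definition bform n (M : 'M[R]_n) (x y : 'cV[R]_n) : R := (x^T *m M *m y) 0 0.

Lemma qformE n (M : 'M[R]_n) x : qform M x = bform M x x.
Proof. by []. Qed.

Lemma bformDl n (M : 'M[R]_n) x y w : bform M (x + y) w = bform M x w + bform M y w.
Proof. by rewrite /bform linearD /= !mulmxDl mxE. Qed.

Lemma bformDr n (M : 'M[R]_n) x y w : bform M w (x + y) = bform M w x + bform M w y.
Proof. by rewrite /bform !mulmxDr mxE. Qed.

Lemma bformZl n (M : 'M[R]_n) a x y : bform M (a *: x) y = a * bform M x y.
Proof. by rewrite /bform linearZ /= -!scalemxAl mxE. Qed.

Lemma bformZr n (M : 'M[R]_n) a x y : bform M x (a *: y) = a * bform M x y.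
Proof. by rewrite /bform -!scalemxAr mxE. Qed.

Lemma bformC n (M : 'M[R]_n) x y : M^T = M -> bform M x y = bform M y x.
Proof.
move=> sM; rewrite /bform -[in LHS](trmxK (x^T *m M *m y)) mxE.
by rewrite !trmx_mul trmxK sM mulmxA.
Qed.

Lemma qformZ n (M : 'M[R]_n) a x : qform M (a *: x) = a ^+ 2 * qform M x.
Proof. by rewrite !qformE bformZl bformZr mulrA -expr2. Qed.

Lemma qform0 n (M : 'M[R]_n) : qform M 0 = 0.
Proof. by rewrite -(scale0r 0) qformZ expr0n mul0r. Qed.

Lemma qformDZ n (M : 'M[R]_n) x y t : M^T = M ->
  qform M (x + t *: y) = qform M x + 2 * t * bform M y x + t ^+ 2 * qform M y.
Proof.
move=> sM; rewrite !qformE bformDl !bformDr !bformZl !bformZr (bformC x y sM).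
by rewrite expr2; ring.
Qed.

Lemma qformBl n (M N : 'M[R]_n) x : qform (M - N) x = qform M x - qform N x.
Proof. by rewrite /qform mulmxBr mulmxBl !mxE. Qed.

Lemma qform_scalar n a (x : 'cV[R]_n) : qform a%:M x = a * vnorm x ^+ 2.
Proof.
rewrite /qform /vnorm sqr_sqrtr ?sumr_ge0 // => [|i _]; last exact: sqr_ge0.
rewrite mul_mx_scalar -scalemxAl mxE mxE; congr (_ * _).
by apply: eq_bigr => i _; rewrite !mxE expr2.
Qed.

Lemma qform_posdef_ge0 n (M : 'M[R]_n) x : sym_posdef M -> 0 <= qform M x.
Proof.
by move=> [_ pM]; have [->|/pM/ltW//] := eqVneq x 0; rewrite qform0.
Qed.

End QuadraticForms.

Section EuclideanNorm.
Variable R : realType.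
Implicit Types (n : nat) (a : R).

Lemma vnorm_ge0 n (x : 'cV[R]_n) : 0 <= vnorm x.
Proof. exact: sqrtr_ge0. Qed.

Lemma vnorm_sqrE n (x : 'cV[R]_n) : vnorm x ^+ 2 = \sum_i x i 0 ^+ 2.
Proof. by rewrite sqr_sqrtr // sumr_ge0 // => i _; rewrite sqr_ge0. Qed.

Lemma vnorm_sqr_qform n (x : 'cV[R]_n) : vnorm x ^+ 2 = qform 1%:M x.
Proof. by rewrite qform_scalar mul1r. Qed.

Lemma vnormZ n a (x : 'cV[R]_n) : vnorm (a *: x) = `|a| * vnorm x.
Proof.
apply/eqP; rewrite -(@eqrXn2 _ 2) ?nnegrE ?mulr_ge0 ?vnorm_ge0 //.
by rewrite exprMn !vnorm_sqr_qform qformZ real_normK ?num_real.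
Qed.

Lemma vnormN n (x : 'cV[R]_n) : vnorm (- x) = vnorm x.
Proof. by rewrite -scaleN1r vnormZ normrN normr1 mul1r. Qed.

Lemma vnorm0 n : vnorm (0 : 'cV[R]_n) = 0.
Proof. by rewrite -(scale0r 0) vnormZ normr0 mul0r. Qed.

Lemma vnorm_eq0 n (x : 'cV[R]_n) : (vnorm x == 0) = (x == 0).
Proof.
apply/idP/idP => [|/eqP->]; last by rewrite vnorm0.
rewrite -sqrf_eq0 vnorm_sqrE psumr_eq0 => [/allP x0|i _]; last exact: sqr_ge0.
apply/eqP/matrixP => i j; rewrite (ord1 j) mxE.
by apply/eqP; rewrite -sqrf_eq0; apply: (implyP (x0 i (mem_index_enum _))).
Qed.

Lemma vnorm_gt0 n (x : 'cV[R]_n) : (0 < vnorm x) = (x != 0).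
Proof. by rewrite lt_neqAle vnorm_ge0 andbT eq_sym vnorm_eq0. Qed.

Lemma vnorm_dim0 (x : 'cV[R]_0) : vnorm x = 0.
Proof. by rewrite /vnorm big_ord0 sqrtr0. Qed.

Lemma entry_le_vnorm n (x : 'cV[R]_n) i : `|x i 0| <= vnorm x.
Proof.
rewrite -(@ler_pXn2r _ 2) ?nnegrE ?vnorm_ge0 // real_normK ?num_real //.
by rewrite vnorm_sqrE (bigD1 i) //= lerDl sumr_ge0 // => k _; exact: sqr_ge0.
Qed.

Lemma vnorm_col_mx n1 n2 (x : 'cV[R]_n1) (y : 'cV[R]_n2) :
  vnorm (col_mx x y) ^+ 2 = vnorm x ^+ 2 + vnorm y ^+ 2.
Proof.
rewrite !vnorm_sqrE big_split_ord /=.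
by congr (_ + _); apply: eq_bigr => i _; rewrite (col_mxEu, col_mxEd).
Qed.

Lemma vnorm_dsubmx n1 n2 (z : 'cV[R]_(n1 + n2)) : vnorm (dsubmx z) <= vnorm z.
Proof.
rewrite -(@ler_pXn2r _ 2) ?nnegrE ?vnorm_ge0 //.
by rewrite -{2}(vsubmxK z) vnorm_col_mx lerDr sqr_ge0.
Qed.

Lemma qform_le_entries n (M : 'M[R]_n) x :
  qform M x <= (\sum_i \sum_j `|M i j|) * vnorm x ^+ 2.
Proof.
rewrite /qform mxE exchange_big mulr_suml; apply: (le_trans (ler_norm _)).
apply: (le_trans (ler_norm_sum _ _ _)); apply: ler_sum => j _.
rewrite normrM mxE mulr_suml; apply: (le_trans (ler_wpM2r (normr_ge0 _) (ler_norm_sum _ _ _))).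
rewrite mulr_suml; apply: ler_sum => i _; rewrite mxE !normrM -mulrA mulrCA.
apply: ler_wpM2l => //.
have := entry_le_vnorm x i; have := entry_le_vnorm x j.
have := normr_ge0 (x i 0); have := normr_ge0 (x j 0); nra.
Qed.

End EuclideanNorm.

Section OperatorNorm.
Variable R : realType.

Lemma qform_mulmx m n (M : 'M[R]_m) (A : 'M[R]_(m, n)) x :
  qform M (A *m x) = qform (A^T *m M *m A) x.
Proof. by rewrite /qform trmx_mul !mulmxA. Qed.

Lemma opnorm_ub m n (A : 'M[R]_(m, n)) (x : 'cV[R]_n) :
  vnorm x <= 1 -> vnorm (A *m x) <= opnorm A.
Proof.
move=> x1; apply: sup_upper_bound; last by exists x.
split; first by exists (vnorm (A *m x)), x.
pose K := \sum_i \sum_j `|(A^T *m 1%:M *m A) i j|.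
exists (1 + K) => _ [y /= y1 <-].
have K0 : 0 <= K by do 2!apply: sumr_ge0 => ? _.
have : vnorm (A *m y) ^+ 2 <= K.
  rewrite vnorm_sqr_qform qform_mulmx; apply: le_trans (qform_le_entries _ _) _.
  rewrite ler_piMr // -(expr1n _ 2) ler_pXn2r ?nnegrE ?vnorm_ge0 //.
have := vnorm_ge0 (A *m y); nra.
Qed.

Lemma opnorm_ge0 m n (A : 'M[R]_(m, n)) : 0 <= opnorm A.
Proof. by rewrite -(vnorm0 R m) -(mulmx0 _ A) opnorm_ub // vnorm0. Qed.

Lemma vnorm_mulmx_le m n (A : 'M[R]_(m, n)) x :
  vnorm (A *m x) <= opnorm A * vnorm x.
Proof.
have [->|x0] := eqVneq x 0; first by rewrite mulmx0 !vnorm0 mulr0.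
have vx0 : 0 < vnorm x by rewrite vnorm_gt0.
have := @opnorm_ub _ _ A ((vnorm x)^-1 *: x).
rewrite vnormZ -scalemxAr vnormZ ger0_norm ?invr_ge0 ?vnorm_ge0 // mulVf ?gt_eqF //.
by rewrite lexx mulrC ler_pdivrMr //; apply.
Qed.

Lemma vnorm_mulmx_sqr_le m n (A : 'M[R]_(m, n)) x :
  vnorm (A *m x) ^+ 2 <= opnorm A ^+ 2 * vnorm x ^+ 2.
Proof.
rewrite -exprMn ler_pXn2r ?nnegrE ?mulr_ge0 ?vnorm_ge0 ?opnorm_ge0 //.
exact: vnorm_mulmx_le.
Qed.

Lemma vnorm_mulmx_pair_sqr_le k n l (A : 'M[R]_(k, n)) (B : 'M[R]_(k, l)) x y :
  vnorm (A *m x + B *m y) ^+ 2 <= opnorm (row_mx A B) ^+ 2 * (vnorm x ^+ 2 + vnorm y ^+ 2).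
Proof. by rewrite -mul_row_col -vnorm_col_mx; exact: vnorm_mulmx_sqr_le. Qed.

End OperatorNorm.

Section MatrixTopology.
Variable R : realType.

Lemma entry_le_mx_norm m n (A : 'M[R]_(m, n)) i j : `|A i j| <= `|A|.
Proof.
rewrite [leRHS]/Num.Def.normr /= mx_normrE.
by apply: le_trans (le_bigmax _ _ (i, j)); rewrite lexx.
Qed.

Lemma mx_norm_le_entries m n (A : 'M[R]_(m, n)) r :
  0 <= r -> (forall i j, `|A i j| <= r) -> `|A| <= r.
Proof.
move=> r0 Ar; rewrite [leLHS]/Num.Def.normr /= mx_normrE.
by apply/bigmax_leP; split => // -[i j] _; exact: Ar.
Qed.

Lemma mulmx_continuous m n p (A : 'M[R]_(m, n)) :
  continuous (mulmx A : 'M[R]_(n, p) -> 'M[R]_(m, p)).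
Proof.
apply/linear_bounded_continuous/bounded_funP => r.
exists (\sum_i \sum_k `|A i k| * `|r|) => x xr.
apply: mx_norm_le_entries => [|i j]; first by do 2!apply: sumr_ge0 => ? _.
rewrite (bigD1 i) //= mxE; apply: le_trans (ler_norm_sum _ _ _) _.
apply: ler_wpDr; first by apply: sumr_ge0 => ? _; apply: sumr_ge0.
apply: ler_sum => k _; rewrite normrM ler_wpM2l //.
exact: le_trans (entry_le_mx_norm _ _ _) (le_trans xr (ler_norm _)).
Qed.

Lemma trmx_continuous m n : continuous (@trmx R m n).
Proof.
apply/linear_bounded_continuous/bounded_funP => r.
exists `|r| => x xr; apply: mx_norm_le_entries => // i j.
by rewrite mxE; exact: le_trans (entry_le_mx_norm _ _ _) (le_trans xr (ler_norm _)).
Qed.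

Lemma closed_bounded_compact_cV n (A : set 'cV[R]_n) (B : R) :
  closed A -> (forall x, A x -> forall i, `|x i 0| <= B) -> compact A.
Proof.
move=> cA AB; have -> : A = trmx @` [set v : 'rV[R]_n | A v^T].
  apply/seteqP; split=> [x Ax|_ [v Av <-] //]; by exists x^T; rewrite /= trmxK.
apply: continuous_compact; first exact/continuous_subspaceT/trmx_continuous.
apply: bounded_closed_compact; last first.
  by apply: preimage_closed cA => v _; exact: trmx_continuous.
exists `|B|; split; first exact: num_real.
move=> M BM v Av; apply: mx_norm_le_entries => [|i j]; first exact: le_trans (ltW BM).
have -> : v i j = v^T j 0 by rewrite mxE (ord1 i).
apply: le_trans (ltW BM).
exact: le_trans (AB _ Av j) (ler_norm B).
Qed.

Lemma qform_continuous n (M : 'M[R]_n) : continuous (qform M).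
Proof.
have -> : qform M = fun x => \sum_k x k 0 * (M *m x) k 0.
  by apply: funext => x; rewrite /qform -mulmxA mxE; apply: eq_bigr => k _; rewrite mxE.
apply: continuous_big => [|k _ x]; first exact: add_continuous.
apply: continuousM; first exact: coord_continuous.
apply: (@continuous_comp _ _ _ (mulmx M) (fun y => y k 0)); [exact: mulmx_continuous|exact: coord_continuous].
Qed.

End MatrixTopology.

Section RayleighQuotient.
Variable R : realType.

Lemma quadratic_ge0_lin_coef_eq0 (c d : R) : (forall t, 0 <= t * c + t ^+ 2 * d) -> c = 0.
Proof.
move=> H; apply/eqP; apply/negPn/negP => c0.
pose s := `|d| + 1; have s0 : 0 < s by rewrite ltr_wpDl.
have := H (- c / s); have hd := ler_norm d.
have c2 : 0 < c ^+ 2 by rewrite lt_neqAle sqr_ge0 andbT eq_sym sqrf_eq0.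
have -> : - c / s * c + (- c / s) ^+ 2 * d = c ^+ 2 / s ^+ 2 * (d - s).
  by rewrite /s; field; rewrite gt_eqF.
rewrite pmulr_rge0; last by rewrite divr_gt0 // exprn_gt0.
rewrite /s; lra.
Qed.

Lemma psd_qform_eq0 n (N : 'M[R]_n) x : N^T = N ->
  (forall y, 0 <= qform N y) -> qform N x = 0 -> N *m x = 0.
Proof.
move=> sN psdN Nx0; apply/eqP; rewrite -vnorm_eq0 -sqrf_eq0; apply/eqP.
apply: (@quadratic_ge0_lin_coef_eq0 _ (qform N (N *m x) / 4)) => t.
have -> : vnorm (N *m x) ^+ 2 = bform N (N *m x) x.
  by rewrite vnorm_sqr_qform /qform /bform mulmx1 mulmxA.
apply: le_trans (psdN (x + (t / 2) *: (N *m x))) _.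
by rewrite qformDZ // Nx0 add0r le_eqVlt; apply/orP; left; apply/eqP; field.
Qed.

Lemma rayleigh_min_eigen n (M : 'M[R]_n) m x0 : M^T = M ->
  (forall x, m * vnorm x ^+ 2 <= qform M x) -> qform M x0 = m * vnorm x0 ^+ 2 ->
  M *m x0 = m *: x0.
Proof.
move=> sM mM Mx0; apply/eqP; rewrite -subr_eq0 -mul_scalar_mx -mulmxBl; apply/eqP.
apply: psd_qform_eq0 => [|y|]; first by rewrite linearB /= sM tr_scalar_mx.
  by rewrite qformBl qform_scalar subr_ge0.
by rewrite qformBl qform_scalar Mx0 subrr.
Qed.

Lemma unit_sphere_qform_min n (M : 'M[R]_n.+1) :
  exists2 x0, vnorm x0 = 1 & forall x, qform M x0 * vnorm x ^+ 2 <= qform M x.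
Proof.
pose S := [set x : 'cV[R]_n.+1 | qform 1%:M x = 1].
have S0 : S !=set0.
  exists (delta_mx 0 0); rewrite /S /= -vnorm_sqr_qform vnorm_sqrE (bigD1 0) //=.
  rewrite mxE eqxx expr1n big1 ?addr0 // => i /negbTE i0.
  by rewrite mxE i0 expr0n.
have S1 x : S x -> vnorm x = 1.
  by move=> Sx; apply/eqP; rewrite -sqrp_eq1 ?vnorm_ge0 // vnorm_sqr_qform Sx.
have cS : compact S.
  apply: (@closed_bounded_compact_cV _ _ _ 1) => [|x Sx i].
    apply: (@preimage_closed _ _ (qform 1%:M) [set 1]); last exact: closed_eq.
    by move=> x _; exact: qform_continuous.
  by rewrite -(S1 x Sx) entry_le_vnorm.
have [x0 /set_mem Sx0 x0min] :=
  compact_EVT_min S0 cS (continuous_subspaceT (@qform_continuous _ _ M)).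
exists x0 => [|x]; first exact: S1.
have [->|x0'] := eqVneq x 0; first by rewrite vnorm0 qform0 expr0n mulr0.
have vx : 0 < vnorm x by rewrite vnorm_gt0.
have /x0min : (vnorm x)^-1 *: x \in S.
  by rewrite inE /S /= -vnorm_sqr_qform vnormZ ger0_norm ?invr_ge0 ?vnorm_ge0 // mulVf ?gt_eqF // expr1n.
by rewrite qformZ exprVn -ler_pdivlMr ?exprn_gt0 // mulrC.
Qed.
End RayleighQuotient.

Section MinimumEigenvalue.
Variable R : realType.

Lemma qform_eigen n (M : 'M[R]_n) r (v : 'rV[R]_n) :
  v *m M = r *: v -> qform M v^T = r * vnorm v^T ^+ 2.
Proof. by move=> vM; rewrite vnorm_sqr_qform /qform !trmxK vM mulmx1 -scalemxAl mxE. Qed.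

Lemma lambda_min_dim0 (M : 'M[R]_0) : lambda_min M = 0.
Proof.
rewrite /lambda_min (_ : [set r | eigenvalue M r] = set0) ?inf0 //.
by apply/seteqP; split => // r /eigenvalueP [v _]; rewrite thinmx0 eqxx.
Qed.

(* In dimension 0, [lambda_min M] is the infimum of the empty set, i.e. 0; this is
   why only [lambda_min M <= l] is asserted. *)
Lemma posdef_coercive n (M : 'M[R]_n) : sym_posdef M ->
  exists l, [/\ 0 < l, 0 <= lambda_min M <= l & forall x, l * vnorm x ^+ 2 <= qform M x].
Proof.
case: n M => [|n] M [sM pM].
  exists 1; rewrite lambda_min_dim0 lexx ler01; split => // x.
  by rewrite vnorm_dim0 expr0n mulr0 (flatmx0 x) qform0.
have [x0 x01 x0min] := unit_sphere_qform_min M.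
set m := qform M x0 in x0min.
have x0nz : x0 != 0 by rewrite -vnorm_gt0 x01.
have m0 : 0 < m := pM x0 x0nz.
have eig : eigenvalue M m.
  apply/eigenvalueP; exists x0^T.
    rewrite -[M in LHS]sM -trmx_mul (rayleigh_min_eigen sM x0min) ?linearZ //.
    by rewrite x01 expr1n mulr1.
  by rewrite -trmx0 (inj_eq (@trmx_inj _ _ _)).
have lbm : lbound [set r | eigenvalue M r] m.
  move=> r /eigenvalueP [v /qform_eigen vM v0]; have := x0min v^T.
  rewrite vM ler_pM2r // exprn_gt0 // vnorm_gt0.
  by apply: contra v0 => /eqP/(congr1 trmx); rewrite trmxK trmx0 => ->.
have -> : lambda_min M = m.
  apply/eqP; rewrite eq_le lb_le_inf ?andbT //; last by exists m.
  by apply: ge_inf => //; exists m.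
by exists m; split; rewrite ?lexx ?ltW.
Qed.
End MinimumEigenvalue.

Section Sublevel.
Variable R : realType.

Definition sublevel n (M : 'M[R]_n) (c : R) := [set x : 'cV[R]_n | qform M x <= c].

Lemma sublevel_origin_interior n (M : 'M[R]_n) c : 0 < c -> origin_interior (sublevel M c).
Proof.
move=> c0; pose K := \sum_i \sum_j `|M i j|.
have K0 : 0 <= K by do 2!apply: sumr_ge0 => ? _.
exists (Num.sqrt (c / (K + 1))); split => [|x]; first by rewrite sqrtr_gt0 divr_gt0 ?ltr_wpDl.
rewrite -ltr_sqr ?nnegrE ?vnorm_ge0 ?sqrtr_ge0 // [X in _ < X]sqr_sqrtr; last first.
  by apply/ltW; rewrite divr_gt0 ?ltr_wpDl.
rewrite ltr_pdivlMr ?ltr_wpDl // => xc; apply: le_trans (qform_le_entries M x) _.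
rewrite -/K; have := sqr_ge0 (vnorm x); nra.
Qed.

Lemma compact_sublevel n (M : 'M[R]_n) c : sym_posdef M -> compact (sublevel M c).
Proof.
move=> /posdef_coercive [l [l0 _ lM]].
apply: (@closed_bounded_compact_cV _ _ _ (Num.sqrt `|c / l|)) => [|x xc i].
  apply: (@preimage_closed _ _ (qform M) [set r | r <= c]); last exact: closed_le.
  by move=> x _; exact: qform_continuous.
apply: le_trans (entry_le_vnorm x i) _.
rewrite -ler_sqr ?nnegrE ?vnorm_ge0 ?sqrtr_ge0 // [X in _ <= X]sqr_sqrtr //.
apply: le_trans (ler_norm _); rewrite ler_pdivlMr // mulrC.
exact: le_trans (lM x) xc.
Qed.

Lemma scale_sublevel n (M : 'M[R]_n) c l x : 0 < l -> qform M x <= l * c ->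
  scale_set (Num.sqrt l) (sublevel M c) x.
Proof.
move=> l0 xc; have sl0 : 0 < Num.sqrt l by rewrite sqrtr_gt0.
exists ((Num.sqrt l)^-1 *: x); last by rewrite scalerA mulfV ?gt_eqF ?scale1r.
by rewrite /sublevel /= qformZ exprVn (sqr_sqrtr (ltW l0)) ler_pdivrMl.
Qed.

Lemma sqrtr_in01 (l : R) : 0 < l < 1 -> 0 <= Num.sqrt l < 1.
Proof. by case/andP => l0 l1; rewrite sqrtr_ge0 /= -sqrtr1 ltr_sqrt. Qed.

End Sublevel.

Section StrictDecrease.
Variable R : realType.

Lemma ge0_of_punctured_gt0 (g : R -> R) :
  {for 0, continuous g} -> (forall s, s != 0 -> 0 < g s) -> 0 <= g 0.
Proof.
move=> /continuous_withinNx g0 gt0.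
apply: (closed_cvg (fun x : R => 0 <= x)) g0; first exact: closed_ge.
by exists 1 => //= s _ s0; exact/ltW/gt0.
Qed.

Lemma compact_contraction (T : topologicalType) (K : set T) (f : T -> R) c :
  compact K -> {within K, continuous f} -> 0 < c -> (forall x, K x -> f x < c) ->
  exists2 l, 0 < l < 1 & forall x, K x -> f x <= l * c.
Proof.
move=> cK cf c0 fc; have [->|K0] := eqVneq K set0.
  by exists (1 / 2) => //; rewrite divr_gt0 //= ltr_pdivrMr //; lra.
have [x0 /set_mem Kx0 x0max] := compact_EVT_max ((set0P K).1 K0) cK cf.
exists (Num.max (f x0 / c) (1 / 2)).
  rewrite lt_max gt_max ltr_pdivrMr // (mul1r c) fc //; apply/and3P; split => //; last lra.
  by apply/orP; right; rewrite divr_gt0.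
move=> x Kx; rewrite -ler_pdivrMr // le_max; apply/orP; left.
by rewrite ler_pM2r ?invr_gt0 // x0max // inE.
Qed.

Lemma qform_line_continuous n (M : 'M[R]_n) x y :
  continuous (fun s : R => qform M (x + s *: y)).
Proof.
move=> s; apply: (@continuous_comp _ _ _ (fun s : R => x + s *: y) (qform M)).
  by apply: continuousD; [exact: cst_continuous|exact: scalel_continuous].
exact: qform_continuous.
Qed.

(* Taking b = 0 in the decrease inequality shows alpha < 1; at a = 0 the inequality
   survives, non-strictly, by continuity along a line through a nonzero vector. *)
Lemma sublevel_strict_decrease n k (M Ma : 'M[R]_n) (Mb : 'M[R]_(n, k))
    (W : 'cV[R]_k -> R) alpha c a b :
  sym_posdef M -> 0 < c -> W 0 = 0 ->
  (forall a b, a != 0 ->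
     qform M (Ma *m a + Mb *m b) - qform M a < - alpha * qform M a + W b) ->
  qform M a <= c -> W b <= alpha * c -> qform M (Ma *m a + Mb *m b) < c.
Proof.
move=> pM c0 W0 dec ac bc; have F0 x := qform_posdef_ge0 x pM.
have [[e e0]|] := pselect (exists e : 'cV[R]_n, e != 0); last first.
  move=> all0; have -> : Ma *m a + Mb *m b = 0.
    by apply: contrapT => /eqP nz; apply: all0; exists (Ma *m a + Mb *m b).
  by rewrite qform0.
have alpha1 : alpha < 1.
  have := dec e 0 e0; rewrite mulmx0 addr0 W0 addr0.
  have := pM.2 e e0; have := F0 (Ma *m e); nra.
have [a0|a0] := eqVneq a 0; last by have := dec a b a0; have := F0 a; nra.
suff : qform M (Ma *m a + Mb *m b) <= W b by nra.
pose g s := - alpha * qform M (0 + s *: e) + W b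
  - (qform M (Mb *m b + s *: (Ma *m e)) - qform M (0 + s *: e)).
have : 0 <= g 0.
  apply: ge0_of_punctured_gt0 => [|s s0].
    apply: continuousD; last apply: continuousN; last apply: continuousB;
      try exact: qform_line_continuous.
    apply: continuousD; last exact: cst_continuous.
    by apply: continuousM; [exact: cst_continuous|exact: qform_line_continuous].
  rewrite /g subr_gt0 add0r scalemxAr (addrC (Mb *m b)); apply: dec.
  by rewrite scaler_eq0 negb_or s0.
by rewrite /g !scale0r !addr0 a0 mulmx0 add0r qform0; lra.
Qed.
End StrictDecrease.

Section SmallGain.
Variable R : realType.

Lemma qform_pair_continuous n k l (M : 'M[R]_l) (A : 'M[R]_(l, n)) (B : 'M[R]_(l, k)) :
  continuous (fun w : 'cV[R]_n * 'cV[R]_k => qform M (A *m w.1 + B *m w.2)).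
Proof.
move=> w; apply: (@continuous_comp _ _ _ (fun w : 'cV[R]_n * 'cV[R]_k => A *m w.1 + B *m w.2)).
  apply: continuousD.
    by apply: (@continuous_comp _ _ _ fst (mulmx A)); [exact: cvg_fst|exact: mulmx_continuous].
  by apply: (@continuous_comp _ _ _ snd (mulmx B)); [exact: cvg_snd|exact: mulmx_continuous].
exact: qform_continuous.
Qed.

Lemma small_gain_contraction n k (Q : 'M[R]_n) (P : 'M[R]_k)
    (Maa : 'M[R]_n) (Mab : 'M[R]_(n, k)) (Mbb : 'M[R]_k) (Mba : 'M[R]_(k, n))
    (W1 : 'cV[R]_k -> R) (W2 : 'cV[R]_n -> R) alpha1 alpha2 c1 c2 :
  sym_posdef Q -> sym_posdef P -> 0 < c1 -> 0 < c2 -> W1 0 = 0 -> W2 0 = 0 ->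
  (forall a b, a != 0 ->
     qform Q (Maa *m a + Mab *m b) - qform Q a < - alpha1 * qform Q a + W1 b) ->
  (forall b a, b != 0 ->
     qform P (Mbb *m b + Mba *m a) - qform P b < - alpha2 * qform P b + W2 a) ->
  (forall b, qform P b <= c2 -> W1 b <= alpha1 * c1) ->
  (forall a, qform Q a <= c1 -> W2 a <= alpha2 * c2) ->
  exists l1 l2, [/\ 0 < l1 < 1, 0 < l2 < 1 & forall a b,
    qform Q a <= c1 -> qform P b <= c2 ->
    qform Q (Maa *m a + Mab *m b) <= l1 * c1 /\ qform P (Mbb *m b + Mba *m a) <= l2 * c2].
Proof.
move=> pQ pP c10 c20 W10 W20 dec1 dec2 gain1 gain2.
pose K := sublevel Q c1 `*` sublevel P c2.
have cK : compact K by apply: compact_setX; exact: compact_sublevel.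
have [l1 l1_01 next1] : exists2 l1, 0 < l1 < 1 & forall w, K w ->
    qform Q (Maa *m w.1 + Mab *m w.2) <= l1 * c1.
  apply: compact_contraction => //; first exact/continuous_subspaceT/qform_pair_continuous.
  move=> [a b] [/= aQ bP]; exact: sublevel_strict_decrease (gain1 _ bP).
have [l2 l2_01 next2] : exists2 l2, 0 < l2 < 1 & forall w, K w ->
    qform P (Mbb *m w.2 + Mba *m w.1) <= l2 * c2.
  apply: compact_contraction => //.
    apply/continuous_subspaceT => w.
    rewrite (_ : (fun w => _) = fun w : 'cV[R]_n * 'cV[R]_k => qform P (Mba *m w.1 + Mbb *m w.2)).
      exact: qform_pair_continuous.
    by apply: funext => w'; rewrite addrC.
  move=> [a b] [/= aQ bP]; exact: sublevel_strict_decrease (gain2 _ aQ).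
by exists l1, l2; split => // a b aQ bP; split; [exact: (next1 (a, b))|exact: (next2 (a, b))].
Qed.
End SmallGain.

Section SmallGainLevels.
Variable R : realType.

Lemma small_gain_ratio (a b p q : R) :
  0 <= a -> 0 <= b -> 0 < p -> 0 < q -> a * b <= p * q ->
  exists2 k, 0 < k & a * k <= p /\ b <= q * k.
Proof.
move=> a0 b0 p0 q0 abpq.
(* The mediant (p + b) / (q + a) lies between b / q and p / a. *)
exists ((p + b) / (q + a)).
  by rewrite divr_gt0 ?ltr_wpDr ?ltr_wpDl.
have qa0 : 0 < q + a by rewrite ltr_wpDr.
by rewrite mulrA ler_pdivrMr // mulrA ler_pdivlMr //; split; nra.
Qed.

Lemma coercive_sublevel_vnorm n (M : 'M[R]_n) l c x : 0 < l ->
  l * vnorm x ^+ 2 <= qform M x -> qform M x <= c -> vnorm x ^+ 2 <= c / l.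
Proof. by move=> l0 lx xc; rewrite ler_pdivlMr // mulrC; exact: le_trans xc. Qed.

Lemma sublevel_pair_small n k l (Q : 'M[R]_n) (P : 'M[R]_k)
    (A : 'M[R]_(l, n)) (B : 'M[R]_(l, k)) r kappa :
  sym_posdef Q -> sym_posdef P -> 0 < r -> 0 < kappa ->
  exists2 t, 0 < t & forall z x, qform Q z <= t -> qform P x <= kappa * t ->
    vnorm (A *m z + B *m x) < r.
Proof.
move=> /posdef_coercive [lQ [lQ0 _ cQ]] /posdef_coercive [lP [lP0 _ cP]] r0 k0.
pose nu := opnorm (row_mx A B); pose a := nu ^+ 2 * (lQ^-1 + kappa / lP).
have a0 : 0 <= a by rewrite mulr_ge0 ?sqr_ge0 ?addr_ge0 ?invr_ge0 ?divr_ge0 ?ltW.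
pose t := r ^+ 2 / (a + 1).
exists t => [|z x zQ xP]; first by rewrite divr_gt0 ?exprn_gt0 ?ltr_wpDl.
rewrite -(@ltr_pXn2r _ 2) ?nnegrE ?vnorm_ge0 ?(ltW r0) //.
apply: (@le_lt_trans _ _ (nu ^+ 2 * (t / lQ + kappa * t / lP))).
  apply: le_trans (vnorm_mulmx_pair_sqr_le _ _ _ _) _.
  rewrite ler_wpM2l ?sqr_ge0 // lerD //; first exact: coercive_sublevel_vnorm lQ0 (cQ z) zQ.
  exact: coercive_sublevel_vnorm lP0 (cP x) xP.
have -> : nu ^+ 2 * (t / lQ + kappa * t / lP) = a * t by rewrite /a; field; rewrite !gt_eqF.
rewrite /t mulrA ltr_pdivrMr ?ltr_wpDl //; have := exprn_gt0 2 r0; nra.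
Qed.

Lemma sublevel_gain n (M : 'M[R]_n) (h : 'cV[R]_n -> R) l G c d x :
  0 < l -> 0 <= G -> l * vnorm x ^+ 2 <= qform M x -> h x <= G * vnorm x ^+ 2 ->
  G * c <= d * l -> qform M x <= c -> h x <= d.
Proof.
move=> l0 G0 lx hx Gc xc; apply: le_trans hx _; rewrite -(ler_pM2r l0).
apply: le_trans Gc; rewrite -mulrA ler_wpM2l // mulrC.
exact: le_trans lx xc.
Qed.

Lemma small_gain_levels n1 n2 m (Q : 'M[R]_(n1 + n2)) (P : 'M[R]_n2)
    (C : 'M[R]_(m, n2)) (K : 'M[R]_(m, n1 + n2)) alpha1 alpha2 g1 g21 g22 :
  sym_posdef Q -> sym_posdef P -> 0 < alpha1 -> 0 < alpha2 ->
  0 <= g1 -> 0 <= g21 -> 0 <= g22 ->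
  g1 * opnorm C ^+ 2 * (g21 * opnorm K ^+ 2 + g22) <=
    alpha1 * alpha2 * lambda_min P * lambda_min Q ->
  exists2 k, 0 < k & forall t, 0 < t ->
    (forall x, qform P x <= k * t -> g1 * vnorm (C *m x) ^+ 2 <= alpha1 * t) /\
    (forall z, qform Q z <= t ->
       g21 * vnorm (K *m z) ^+ 2 + g22 * vnorm (dsubmx z) ^+ 2 <= alpha2 * (k * t)).
Proof.
move=> pQ pP a1 a2 g1_ge0 g21_ge0 g22_ge0 gain.
have [lQ [lQ0 /andP [lamQ0 lamQ] cQ]] := posdef_coercive pQ.
have [lP [lP0 /andP [lamP0 lamP] cP]] := posdef_coercive pP.
pose G := g21 * opnorm K ^+ 2 + g22.
have G0 : 0 <= G by rewrite /G ?(addr_ge0, mulr_ge0, opnorm_ge0).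
have [k k0 [kC kK]] : exists2 k, 0 < k &
    g1 * opnorm C ^+ 2 * k <= alpha1 * lP /\ G <= alpha2 * lQ * k.
  apply: small_gain_ratio; rewrite ?(mulr_gt0, mulr_ge0, opnorm_ge0) //.
  apply: le_trans gain _; rewrite -mulrA mulrACA.
  by apply: ler_pM; rewrite ?mulr_ge0 ?ler_pM2l // ltW.
exists k => // t t0; split=> [x|z].
  apply: (sublevel_gain (h := fun x => g1 * vnorm (C *m x) ^+ 2)
    (G := g1 * opnorm C ^+ 2) lP0 _ (cP x)); first by rewrite mulr_ge0 ?sqr_ge0.
    by rewrite -mulrA ler_wpM2l ?vnorm_mulmx_sqr_le.
  by rewrite mulrA [leRHS]mulrAC ler_pM2r.
apply: (sublevel_gain (h := fun z => g21 * vnorm (K *m z) ^+ 2 + g22 * vnorm (dsubmx z) ^+ 2)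
  (G := G) lQ0 G0 (cQ z)).
  rewrite /G mulrDl -mulrA lerD ?ler_wpM2l ?vnorm_mulmx_sqr_le //.
  by rewrite ler_sqr ?nnegrE ?vnorm_ge0 ?vnorm_dsubmx.
by rewrite (_ : _ * lQ = alpha2 * lQ * k * t) ?ler_pM2r //; ring.
Qed.

End SmallGainLevels.

Section ClosedLoop.
Variables (R : realType) (n1 n2 m p : nat).
Variables (A1 : 'M[R]_n1) (B1 : 'M[R]_(n1, m)) (A2 : 'M[R]_n2) (B2 : 'M[R]_(n2, p)).
Variables (C : 'M[R]_(m, n2)) (Af : 'M[R]_n2) (Bf : 'M[R]_(n2, m)).
Variables (K1 : 'M[R]_(m, n1 + n2)) (K21 : 'M[R]_(p, m)) (K22 : 'M[R]_(p, n2)).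

(* With z = col_mx x1 xf and xt = x2 - xf the closed loop is linear:
   u = input_aug z - K22 xt, x1aug' = loop_aug z + loop_aug_err xt and
   xt' = loop_err xt + loop_err_aug z; [ref_part] extracts xf from z. *)
Definition ref_part : 'M[R]_(n2, n1 + n2) := row_mx 0 1%:M.

Lemma ref_partE (z : 'cV[R]_(n1 + n2)) : ref_part *m z = dsubmx z.
Proof. by rewrite -{1}(vsubmxK z) mul_row_col mul0mx mul1mx add0r. Qed.

Definition input_aug : 'M[R]_(p, n1 + n2) := - (K21 *m K1) - K22 *m ref_part.
Definition loop_aug : 'M[R]_(n1 + n2) := block_mx A1 (B1 *m C) 0 Af - col_mx 0 Bf *m K1.
Definition loop_aug_err : 'M[R]_(n1 + n2, n2) := col_mx B1 0 *m C.
Definition loop_err_aug : 'M[R]_(n2, n1 + n2) :=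
  (A2 - Af) *m ref_part + B2 *m input_aug + Bf *m K1.
Definition loop_err : 'M[R]_n2 := A2 - B2 *m K22.

Lemma inputE (z : 'cV[R]_(n1 + n2)) x2 :
  K21 *m - (K1 *m z) - K22 *m x2 = input_aug *m z - K22 *m (x2 - dsubmx z).
Proof.
rewrite /input_aug !mulmxBl mulmxBr -mulmxA ref_partE mulNmx -mulmxA mulmxN.
by rewrite opprB addrA subrK.
Qed.

Lemma next_augE (x1 : 'cV[R]_n1) (x2 xf : 'cV[R]_n2) :
  col_mx (A1 *m x1 + B1 *m (C *m x2)) (Af *m xf + Bf *m - (K1 *m col_mx x1 xf)) =
  loop_aug *m col_mx x1 xf + loop_aug_err *m (x2 - xf).
Proof.
rewrite /loop_aug /loop_aug_err mulmxBl mul_block_col -mulmxA !mul_col_mx !mul0mx.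
rewrite opp_col_mx !add_col_mx oppr0 add0r !addr0 mulmxN -!mulmxA.
by congr col_mx; rewrite -addrA -!mulmxDr subrKC.
Qed.

Lemma next_errE (x1 : 'cV[R]_n1) (x2 xf : 'cV[R]_n2) :
  let z := col_mx x1 xf in
  A2 *m x2 + B2 *m (K21 *m - (K1 *m z) - K22 *m x2) - (Af *m xf + Bf *m - (K1 *m z)) =
  loop_err *m (x2 - xf) + loop_err_aug *m z.
Proof.
move=> z; rewrite /loop_err_aug /loop_err /input_aug.
rewrite !(mulmxDl, mulmxBl, mulmxDr, mulmxBr, mulNmx, mulmxN) -!mulmxA ref_partE col_mxKd.
by apply/matrixP => i j; rewrite !mxE; ring.
Qed.
End ClosedLoop.

Unset Implicit Arguments.

Theorem proposition4 (R : realType) (n1 n2 m p : nat)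
  (A1 : 'M[R]_n1) (B1 : 'M[R]_(n1, m))
  (A2 : 'M[R]_n2) (B2 : 'M[R]_(n2, p)) (C : 'M[R]_(m, n2))
  (Af : 'M[R]_n2) (Bf : 'M[R]_(n2, m))
  (U : set 'cV[R]_p)
  (K1 : 'M[R]_(m, n1 + n2)) (K21 : 'M[R]_(p, m)) (K22 : 'M[R]_(p, n2))
  (Q : 'M[R]_(n1 + n2)) (P : 'M[R]_n2)
  (alpha1 alpha2 g1 g21 g22 : R) :
  (* Assumptions 1, 2, 4, 8 *)
  stabilizable A1 B1 ->
  controllable A2 B2 ->
  schur Af ->
  origin_interior U ->
  (* gains *)
  schur (block_mx A1 (B1 *m C) 0 Af - col_mx B1 0 *m K1) ->
  schur (A2 - B2 *m K22) ->
  sym_posdef Q -> sym_posdef P ->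
  0 < alpha1 -> 0 < alpha2 -> 0 < g1 -> 0 < g21 -> 0 <= g22 ->
  (* closed-loop decrease of V1 (for x1aug(k) <> 0) *)
  (forall (x1 : 'cV[R]_n1) (x2 xf : 'cV[R]_n2),
     let x1aug := col_mx x1 xf in
     let vdes := - (K1 *m x1aug) in
     let u := K21 *m vdes - K22 *m x2 in
     let x1' := A1 *m x1 + B1 *m (C *m x2) in
     let x2' := A2 *m x2 + B2 *m u in
     let xf' := Af *m xf + Bf *m vdes in
     let xt := x2 - xf in
     x1aug != 0 ->
     qform Q (col_mx x1' xf') - qform Q x1aug
       < - alpha1 * qform Q x1aug + g1 * vnorm (C *m xt) ^+ 2) ->
  (* closed-loop decrease of V2 (for xtilde(k) <> 0) *)
  (forall (x1 : 'cV[R]_n1) (x2 xf : 'cV[R]_n2),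
     let x1aug := col_mx x1 xf in
     let vdes := - (K1 *m x1aug) in
     let u := K21 *m vdes - K22 *m x2 in
     let x2' := A2 *m x2 + B2 *m u in
     let xf' := Af *m xf + Bf *m vdes in
     let xt := x2 - xf in
     xt != 0 ->
     qform P (x2' - xf') - qform P xt
       < - alpha2 * qform P xt + g21 * vnorm vdes ^+ 2 + g22 * vnorm xf ^+ 2) ->
  alpha1 * alpha2 * lambda_min P * lambda_min Q
    >= g1 * opnorm C ^+ 2 * (g21 * opnorm K1 ^+ 2 + g22) ->
  exists (G1 : set 'cV[R]_(n1 + n2)) (G2 : set 'cV[R]_n2) (l1 l2 : R),
    origin_interior G1 /\ origin_interior G2 /\
    0 <= l1 < 1 /\ 0 <= l2 < 1 /\
    forall (x1 : 'cV[R]_n1) (x2 xf : 'cV[R]_n2),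
      let x1aug := col_mx x1 xf in
      let vdes := - (K1 *m x1aug) in
      let u := K21 *m vdes - K22 *m x2 in
      let x1' := A1 *m x1 + B1 *m (C *m x2) in
      let x2' := A2 *m x2 + B2 *m u in
      let xf' := Af *m xf + Bf *m vdes in
      G1 x1aug -> G2 (x2 - xf) ->
      U u /\ scale_set l1 G1 (col_mx x1' xf') /\ scale_set l2 G2 (x2' - xf').
Proof.
move=> _ _ _ [r [r0 Ur]] _ _ pQ pP a1_gt0 a2_gt0 g1_gt0 g21_gt0 g22_ge0 H1 H2 gain.
have [k k0 gains] := small_gain_levels pQ pP a1_gt0 a2_gt0 (ltW g1_gt0) (ltW g21_gt0) g22_ge0 gain.
have [t t0 u_small] := sublevel_pair_small (input_aug K1 K21 K22) (- K22) pQ pP r0 k0.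
have [gain1 gain2] := gains t t0.
have dec1 z xt : z != 0 ->
    qform Q (loop_aug A1 B1 C Af Bf K1 *m z + loop_aug_err B1 C *m xt) - qform Q z <
    - alpha1 * qform Q z + g1 * vnorm (C *m xt) ^+ 2.
  by have := H1 (usubmx z) (xt + dsubmx z) (dsubmx z); rewrite /= next_augE vsubmxK addrK.
have dec2 xt z : xt != 0 ->
    qform P (loop_err A2 B2 K22 *m xt + loop_err_aug A2 B2 Af Bf K1 K21 K22 *m z) - qform P xt <
    - alpha2 * qform P xt + (g21 * vnorm (K1 *m z) ^+ 2 + g22 * vnorm (dsubmx z) ^+ 2).
  have := H2 (usubmx z) (xt + dsubmx z) (dsubmx z).
  by rewrite /= next_errE vsubmxK addrK vnormN addrA.
have W10 : g1 * vnorm (C *m 0) ^+ 2 = 0 by rewrite mulmx0 vnorm0 expr0n mulr0.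
have W20 : g21 * vnorm (K1 *m 0) ^+ 2 + g22 * vnorm (dsubmx (0 : 'cV[R]_(n1 + n2))) ^+ 2 = 0.
  by rewrite mulmx0 linear0 !vnorm0 expr0n !mulr0 addr0.
have [l1 [l2 [l1_01 l2_01 contract]]] := small_gain_contraction
  (W1 := fun xt => g1 * vnorm (C *m xt) ^+ 2)
  (W2 := fun z => g21 * vnorm (K1 *m z) ^+ 2 + g22 * vnorm (dsubmx z) ^+ 2)
  pQ pP t0 (mulr_gt0 k0 t0) W10 W20 dec1 dec2 gain1 gain2.
exists (sublevel Q t), (sublevel P (k * t)), (Num.sqrt l1), (Num.sqrt l2).
split; first exact: sublevel_origin_interior t0.
split; first exact: sublevel_origin_interior (mulr_gt0 k0 t0).
do 2!(split; first exact: sqrtr_in01).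
move=> x1 x2 xf /= zQ xtP; have [next1 next2] := contract _ _ zQ xtP.
rewrite next_augE next_errE inputE col_mxKd -mulNmx; split; first exact/Ur/u_small.
by split; apply: scale_sublevel => //; [case/andP: l1_01|case/andP: l2_01].
Qed.
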